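(* Assume $A_{11}=0$. Then the local truncation error of the ROE scheme $$\frac{f^i_{j,n+1}-f^i_{j,n}}{\Delta t}+\frac{\lambda_i}{2\Delta x}(f^i_{j+1,n}-f^i_{j-1,n})-\frac{|\lambda_i|}{2\Delta x}(f^i_{j+1,n}-2f^i_{j,n}+f^i_{j-1,n})$$ $$=\frac{M_i(u_{j-1,n})+2M_i(u_{j,n})+M_i(u_{j+1,n})}{4}+\frac{\mathrm{sgn}(\lambda_i)}{4}\big(M_i(u_{j-1,n})-M_i(u_{j+1,n})\big)-\frac{f^i_{j-1,n}+2f^i_{j,n}+f^i_{j+1,n}}{4}-\frac{\mathrm{sgn}(\lambda_i)}{4}\big(f^i_{j-1,n}-f^i_{j+1,n}\big),$$ $i=1,\dots,m$, with fixed ratio $\rho=\Delta t/\Delta x$, satisfies, as $t\to+\infty$, $\mathcal{T}_u=O(\Delta x\,t^{-2})+O(\Delta x^2t^{-3/2})$ and $\mathcal{T}_{\tilde Z}=O(\Delta x\,t^{-2})+O(\Delta x^2t^{-3/2})$.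
   Context: Same setting as Theorem 3.1: BGK system $\partial_tf^i+\lambda_i\partial_xf^i=M_i(u)-f^i$ with $u=\sum_if^i$, Condition ED, the matrix $D$ with $D_{11}=I_k$, $D_{12}=(I_k\cdots I_k)$ transforming to $Z=Df=(u,\tilde Z)$ solving $\partial_tZ+A\partial_xZ=-Z+DM(u)$ with $A=D\Lambda D^{-1}$ symmetric; $A_{11}$ is the top-left $k\times k$ block of $A$ (which equals $\sum_i\lambda_ih_i^{-1}$ where $D^TD=\mathrm{diag}(h_1,\dots,h_m)$). The truncation error is the residual of the scheme on the exact smooth solution, transformed by $D$: $(\mathcal{T}_u,\mathcal{T}_{\tilde Z})=D(\mathcal{T}^1,\dots,\mathcal{T}^m)$. The exact solution is the global smooth solution from small smooth initial data and satisfies the decay estimates $\|\partial_x^\beta Z\|_{L^\infty}\lesssim t^{-1/2-\beta/2}$, $\|\partial_x^\beta\tilde Z\|_{L^\infty}\lesssim t^{-1-\beta/2}$, $\|\partial_x^\beta Z_t\|_{L^\infty}\lesssim t^{-1-\beta/2}$, $\|\partial_x^\beta\tilde Z_t\|_{L^\infty}\lesssim t^{-3/2-\beta/2}$, and, when $A_{11}=0$, $\|u_{tt}\|,\|u_{tx}\|,\|\tilde Z_t\|,\|\tilde Z_{tt}\|\lesssim t^{-2}$. *)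

From Stdlib Require Import Reals Lra Lia Arith List ClassicalEpsilon.
Open Scope R_scope.

(* deriv1 h x = h'(x) whenever h is differentiable at x (limits are unique). *)
Definition deriv1 (h : R -> R) (x : R) : R :=
  epsilon (inhabits 0%R) (fun l => derivable_pt_lim h x l).

Definition diffble (h : R -> R) (x : R) : Prop := exists l, derivable_pt_lim h x l.

Definition PDt (F : R -> R -> R) : R -> R -> R :=
  fun t x => deriv1 (fun s => F s x) t.
Definition PDx (F : R -> R -> R) : R -> R -> R :=
  fun t x => deriv1 (fun y => F t y) x.

Definition DxN (beta : nat) (F : R -> R -> R) : R -> R -> R :=
  Nat.iter beta PDx F.

Fixpoint iterD (w : list bool) (F : R -> R -> R) : R -> R -> R :=
  match w with
  | nil => F
  | b :: w' => (if b then PDt else PDx) (iterD w' F)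
  end.

Definition cont2_at (G : R -> R -> R) (t x : R) : Prop :=
  forall eps, 0 < eps -> exists del, 0 < del /\
    forall t' x', Rabs (t' - t) < del -> Rabs (x' - x) < del ->
      Rabs (G t' x' - G t x) < eps.

Definition smooth_pos (F : R -> R -> R) : Prop :=
  forall (w : list bool) (t x : R), 0 < t ->
    cont2_at (iterD w F) t x /\
    diffble (fun s => iterD w F s x) t /\
    diffble (fun y => iterD w F t y) x.

(* ---------- Vectors of R^k represented as nat -> R (coords 0..k-1) ---------- *)

Definition upd (v : nat -> R) (c : nat) (s : R) : nat -> R :=
  fun d => if Nat.eqb d c then s else v d.

Definition DirD (c : nat) (G : (nat -> R) -> R) : (nat -> R) -> R :=
  fun v => deriv1 (fun s => G (upd v c s)) (v c).

Fixpoint iterDk (w : list nat) (G : (nat -> R) -> R) : (nat -> R) -> R :=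
  match w with
  | nil => G
  | c :: w' => DirD c (iterDk w' G)
  end.

(* continuity w.r.t. the first k coordinates (this also forces G to depend
   only on the first k coordinates) *)
Definition contRk (k : nat) (G : (nat -> R) -> R) : Prop :=
  forall v eps, 0 < eps -> exists del, 0 < del /\
    forall w, (forall c, (c < k)%nat -> Rabs (w c - v c) < del) ->
      Rabs (G w - G v) < eps.

Definition smoothRk (k : nat) (G : (nat -> R) -> R) : Prop :=
  forall w : list nat, Forall (fun c => (c < k)%nat) w ->
    contRk k (iterDk w G) /\
    forall c v, (c < k)%nat -> diffble (fun s => iterDk w G (upd v c s)) (v c).

Fixpoint sumN (n : nat) (g : nat -> R) : R :=
  match n with
  | O => 0
  | S n' => sumN n' g + g n'
  end.

Definition sgn (a : R) : R :=
  if Rlt_dec 0 a then 1 else if Rlt_dec a 0 then -1 else 0.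

(* f i c t x : component c (0<=c<k) of f^i (0<=i<m) at (t,x).
   Global index of (i,c) in R^{mk} : i*k + c, so s |-> (s / k, s mod k). *)

Definition uu (m : nat) (f : nat -> nat -> R -> R -> R) (c : nat) : R -> R -> R :=
  fun t x => sumN m (fun i => f i c t x).

Definition uvec (m : nat) (f : nat -> nat -> R -> R -> R) (t x : R) : nat -> R :=
  fun c => uu m f c t x.

Definition ZZ (m k : nat) (D : nat -> nat -> R) (f : nat -> nat -> R -> R -> R)
  (r : nat) : R -> R -> R :=
  fun t x => sumN (m * k) (fun s => D r s * f (s / k)%nat (s mod k)%nat t x).

(* A = D Lambda D^{-1}, Lambda = diag(lambda_1 I_k, ..., lambda_m I_k) *)
Definition AA (m k : nat) (D Dinv : nat -> nat -> R) (lam : nat -> R)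
  (r s : nat) : R :=
  sumN (m * k) (fun q => D r q * lam (q / k)%nat * Dinv q s).

Definition roe_residual (m : nat) (lam : nat -> R)
  (M : nat -> (nat -> R) -> (nat -> R)) (f : nat -> nat -> R -> R -> R)
  (dt dx : R) (i c : nat) (t x : R) : R :=
  let F := fun tt xx => f i c tt xx in
  let Mi := fun xx => M i (uvec m f t xx) c in
  let fm := F t (x - dx) in let f0 := F t x in let fp := F t (x + dx) in
  let Mm := Mi (x - dx) in let M0 := Mi x in let Mp := Mi (x + dx) in
  (F (t + dt) x - f0) / dt
  + lam i / (2 * dx) * (fp - fm)
  - Rabs (lam i) / (2 * dx) * (fp - 2 * f0 + fm)
  - ( (Mm + 2 * M0 + Mp) / 4
      + sgn (lam i) / 4 * (Mm - Mp)
      - (fm + 2 * f0 + fp) / 4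
      - sgn (lam i) / 4 * (fm - fp) ).

(* Transformed truncation error (T_u, T_Ztilde) = D (T^1, ..., T^m) *)
Definition trunc_Z (m k : nat) (D : nat -> nat -> R) (lam : nat -> R)
  (M : nat -> (nat -> R) -> (nat -> R)) (f : nat -> nat -> R -> R -> R)
  (dt dx : R) (r : nat) (t x : R) : R :=
  sumN (m * k) (fun s => D r s * roe_residual m lam M f dt dx (s / k)%nat (s mod k)%nat t x).

From Stdlib Require Import Reals Lra Lia List ClassicalEpsilon FunctionalExtensionality.
Import ListNotations.
Open Scope R_scope.

(* The truncation error is estimated component by component.  For one scalar
   component F of the exact solution, Taylor expansion in t (to first order)
   and in x (to second order, for F itself, and to first order for
   g = F_t + lambda F_x, which the PDE identifies with M - F) shows that the
   ROE residual is bounded by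
      |F_tt| dt + |F_xt| dx / 2 + (|F_xxt| + 3 |lambda| |F_xxx|) dx^2,
   see [roe_scalar_bound].  When A_11 = 0, the decay hypotheses give all four
   derivatives of Z = D f a rate t^-2; since f = D^-1 Z and derivatives commute
   with finite linear combinations, the same holds for f ([fcomp_decay]).
   Hence each residual is O(dx t^-2 + dx^2 t^-2) ([roe_component_bound]) and
   so is their image under D, which is the claimed estimate because
   t^-2 <= t^-3/2 for t >= 1 ([trunc_Z_decay]). *)

Lemma deriv1_eq h x l : derivable_pt_lim h x l -> deriv1 h x = l.
Proof.
  intro H. unfold deriv1.
  pose proof (epsilon_spec (inhabits 0) (fun l => derivable_pt_lim h x l)
                (ex_intro _ l H)) as E.
  eapply uniqueness_limite; eauto.
Qed.

Lemma diffble_lim h x : diffble h x -> derivable_pt_lim h x (deriv1 h x).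
Proof. intros [l H]. rewrite (deriv1_eq _ _ _ H). exact H. Qed.

Lemma derivable_pt_lim_local g h t l : derivable_pt_lim g t l ->
  (exists del, 0 < del /\ forall y, Rabs (y - t) < del -> h y = g y) ->
  derivable_pt_lim h t l.
Proof.
  intros H [del [Hd He]] eps Heps.
  destruct (H eps Heps) as [delta Hdel].
  assert (Hp : 0 < Rmin delta del) by (apply Rmin_pos; [apply cond_pos | lra]).
  exists (mkposreal _ Hp). intros hh Hh Hlt. simpl in Hlt.
  rewrite (He (t + hh)), (He t).
  - apply Hdel; auto. eapply Rlt_le_trans; [exact Hlt | apply Rmin_l].
  - replace (t - t) with 0 by ring. rewrite Rabs_R0. lra.
  - replace (t + hh - t) with hh by ring.
    eapply Rlt_le_trans; [exact Hlt | apply Rmin_r].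
Qed.

Lemma derivable_pt_lim_ext f g x l :
  derivable_pt_lim f x l -> (forall y, g y = f y) -> derivable_pt_lim g x l.
Proof.
  intros H E. apply derivable_pt_lim_local with f; auto.
  exists 1; split; [lra | auto].
Qed.

Lemma smooth_dx F w t y : smooth_pos F -> 0 < t ->
  derivable_pt_lim (fun z => iterD w F t z) y (iterD (false :: w) F t y).
Proof. intros HF Ht. apply diffble_lim, (HF w t y Ht). Qed.

Lemma smooth_dt F w s y : smooth_pos F -> 0 < s ->
  derivable_pt_lim (fun z => iterD w F z y) s (iterD (true :: w) F s y).
Proof. intros HF Hs. apply diffble_lim, (HF w s y Hs). Qed.

Definition btw (a b y : R) : Prop := Rmin a b <= y <= Rmax a b.

Lemma btw_l a b : btw a b a.
Proof. unfold btw, Rmin, Rmax; destruct (Rle_dec a b); lra. Qed.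

Lemma btw_trans a b y z : btw a b y -> btw a y z -> btw a b z.
Proof. unfold btw, Rmin, Rmax; destruct (Rle_dec a b), (Rle_dec a y); lra. Qed.

Lemma btw_abs a b y : btw a b y -> Rabs (y - a) <= Rabs (b - a).
Proof.
  unfold btw, Rmin, Rmax; destruct (Rle_dec a b); intros;
  unfold Rabs; destruct (Rcase_abs (y - a)), (Rcase_abs (b - a)); lra.
Qed.

Lemma mvt_bound phi phi' a b B :
  (forall y, btw a b y -> derivable_pt_lim phi y (phi' y) /\ Rabs (phi' y) <= B) ->
  Rabs (phi b - phi a) <= B * Rabs (b - a).
Proof.
  intros H.
  assert (Hin : forall c, Rmin a b <= c <= Rmax a b -> btw a b c) by (intros; exact H0).
  destruct (Rtotal_order a b) as [Hab | [<- | Hab]].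
  - destruct (MVT_cor2 phi phi' a b Hab) as [c [Ec Hc]].
    + intros c Hc. apply H, Hin. unfold Rmin, Rmax; destruct (Rle_dec a b); lra.
    + rewrite Ec, Rabs_mult. apply Rmult_le_compat_r; [apply Rabs_pos |].
      apply H, Hin. unfold Rmin, Rmax; destruct (Rle_dec a b); lra.
  - rewrite !Rminus_diag, Rabs_R0, Rmult_0_r; lra.
  - destruct (MVT_cor2 phi phi' b a Hab) as [c [Ec Hc]].
    + intros c Hc. apply H, Hin. unfold Rmin, Rmax; destruct (Rle_dec a b); lra.
    + replace (phi b - phi a) with (- (phi a - phi b)) by ring.
      replace (b - a) with (- (a - b)) by ring.
      rewrite !Rabs_Ropp, Ec, Rabs_mult. apply Rmult_le_compat_r; [apply Rabs_pos |].
      apply H, Hin. unfold Rmin, Rmax; destruct (Rle_dec a b); lra.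
Qed.

Lemma taylor1_bound h h1 h2 a b K :
  (forall y, btw a b y -> derivable_pt_lim h y (h1 y) /\
     derivable_pt_lim h1 y (h2 y) /\ Rabs (h2 y) <= K) ->
  Rabs (h b - h a - (b - a) * h1 a) <= K * (b - a) ^ 2.
Proof.
  intros H.
  assert (HK : 0 <= K) by (destruct (H a (btw_l a b)) as [_ [_ X]];
     eapply Rle_trans; [apply Rabs_pos | exact X]).
  replace (h b - h a - (b - a) * h1 a)
    with ((h b - (b - a) * h1 a) - (h a - (a - a) * h1 a)) by ring.
  replace (K * (b - a) ^ 2) with ((K * Rabs (b - a)) * Rabs (b - a))
    by (rewrite Rmult_assoc, <- Rabs_mult, Rabs_right; [ring | apply Rle_ge, Rle_0_sqr]).
  apply mvt_bound with (phi := fun y => h y - (y - a) * h1 a)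
                      (phi' := fun y => h1 y - h1 a).
  intros y Hy. split.
  - apply derivable_pt_lim_ext
      with (minus_fct h (mult_real_fct (h1 a) (minus_fct id (fct_cte a)))).
    + replace (h1 y - h1 a) with (h1 y - h1 a * (1 - 0)) by ring.
      apply derivable_pt_lim_minus; [apply H; auto |].
      apply derivable_pt_lim_scal, derivable_pt_lim_minus;
        [apply derivable_pt_lim_id | apply derivable_pt_lim_const].
    + intros z. unfold minus_fct, mult_real_fct, id, fct_cte. ring.
  - apply Rle_trans with (K * Rabs (y - a)).
    + apply mvt_bound with (phi' := h2). intros z Hz. apply H. eapply btw_trans; eauto.
    + apply Rmult_le_compat_l; auto. apply btw_abs; auto.
Qed.

Lemma taylor2_bound h h1 h2 h3 a b K :
  (forall y, btw a b y -> derivable_pt_lim h y (h1 y) /\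
     derivable_pt_lim h1 y (h2 y) /\ derivable_pt_lim h2 y (h3 y) /\
     Rabs (h3 y) <= K) ->
  Rabs (h b - h a - (b - a) * h1 a - (b - a) ^ 2 / 2 * h2 a)
    <= K * (b - a) ^ 2 * Rabs (b - a).
Proof.
  intros H.
  assert (HK : 0 <= K) by (destruct (H a (btw_l a b)) as [_ [_ [_ X]]];
     eapply Rle_trans; [apply Rabs_pos | exact X]).
  pose (phi := fun y => h y - (y - a) * h1 a - (y - a) * (y - a) / 2 * h2 a).
  replace (h b - h a - (b - a) * h1 a - (b - a) ^ 2 / 2 * h2 a)
    with (phi b - phi a) by (unfold phi; field).
  apply mvt_bound with (phi' := fun y => h1 y - h1 a - (y - a) * h2 a).
  intros y Hy. split.
  - unfold phi.
    apply derivable_pt_lim_ext with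
      (minus_fct (minus_fct h (mult_real_fct (h1 a) (minus_fct id (fct_cte a))))
         (mult_real_fct (h2 a / 2)
            (mult_fct (minus_fct id (fct_cte a)) (minus_fct id (fct_cte a))))).
    + assert (Did : derivable_pt_lim (minus_fct id (fct_cte a)) y (1 - 0))
        by (apply derivable_pt_lim_minus;
            [apply derivable_pt_lim_id | apply derivable_pt_lim_const]).
      eapply derivable_pt_lim_ext; [| reflexivity].
      replace (h1 y - h1 a - (y - a) * h2 a) with
        (h1 y - h1 a * (1 - 0) - h2 a / 2 * ((1 - 0) * (minus_fct id (fct_cte a) y)
           + minus_fct id (fct_cte a) y * (1 - 0)))
        by (unfold minus_fct, id, fct_cte; field).
      apply derivable_pt_lim_minus; [apply derivable_pt_lim_minus |].
      * apply H; auto.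
      * apply derivable_pt_lim_scal, Did.
      * apply derivable_pt_lim_scal, derivable_pt_lim_mult; apply Did.
    + intros z. unfold minus_fct, mult_real_fct, mult_fct, id, fct_cte. field.
  - apply Rle_trans with (K * (y - a) ^ 2).
    + apply taylor1_bound with (h2 := h3). intros z Hz. apply H. eapply btw_trans; eauto.
    + apply Rmult_le_compat_l; auto.
      rewrite <- (Rabs_right ((y - a) ^ 2)) by (apply Rle_ge, pow2_ge_0).
      rewrite <- (Rabs_right ((b - a) ^ 2)) by (apply Rle_ge, pow2_ge_0).
      rewrite <- !RPow_abs. apply pow_incr. split; [apply Rabs_pos | apply btw_abs; auto].
Qed.

Lemma taylor1_central h h1 h2 a d K :
  (forall y, derivable_pt_lim h y (h1 y) /\
     derivable_pt_lim h1 y (h2 y) /\ Rabs (h2 y) <= K) ->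
  Rabs (h (a + d) - h a - d * h1 a) <= K * d ^ 2 /\
  Rabs (h (a - d) - h a + d * h1 a) <= K * d ^ 2.
Proof.
  intros H. split.
  - replace (h (a + d) - h a - d * h1 a) with (h (a + d) - h a - (a + d - a) * h1 a) by ring.
    replace (K * d ^ 2) with (K * (a + d - a) ^ 2) by ring.
    apply taylor1_bound with h2; auto.
  - replace (h (a - d) - h a + d * h1 a) with (h (a - d) - h a - (a - d - a) * h1 a) by ring.
    replace (K * d ^ 2) with (K * (a - d - a) ^ 2) by ring.
    apply taylor1_bound with h2; auto.
Qed.

Lemma taylor2_central h h1 h2 h3 a d K : 0 < d ->
  (forall y, derivable_pt_lim h y (h1 y) /\ derivable_pt_lim h1 y (h2 y) /\
     derivable_pt_lim h2 y (h3 y) /\ Rabs (h3 y) <= K) ->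
  Rabs (h (a + d) - h a - d * h1 a - d ^ 2 / 2 * h2 a) <= K * d ^ 3 /\
  Rabs (h (a - d) - h a + d * h1 a - d ^ 2 / 2 * h2 a) <= K * d ^ 3.
Proof.
  intros Hd H. split.
  - replace (h (a + d) - h a - d * h1 a - d ^ 2 / 2 * h2 a)
      with (h (a + d) - h a - (a + d - a) * h1 a - (a + d - a) ^ 2 / 2 * h2 a) by field.
    replace (K * d ^ 3) with (K * (a + d - a) ^ 2 * Rabs (a + d - a))
      by (replace (a + d - a) with d by ring; rewrite Rabs_right by lra; ring).
    apply taylor2_bound with h3; auto.
  - replace (h (a - d) - h a + d * h1 a - d ^ 2 / 2 * h2 a)
      with (h (a - d) - h a - (a - d - a) * h1 a - (a - d - a) ^ 2 / 2 * h2 a) by field.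
    replace (K * d ^ 3) with (K * (a - d - a) ^ 2 * Rabs (a - d - a))
      by (replace (a - d - a) with (- d) by ring; rewrite Rabs_Ropp, Rabs_right by lra; ring).
    apply taylor2_bound with h3; auto.
Qed.

Lemma sumN_ext n g h : (forall q, (q < n)%nat -> g q = h q) -> sumN n g = sumN n h.
Proof. induction n; intros H; simpl; auto. rewrite IHn, H; auto; intros; apply H; lia. Qed.

Lemma sumN_plus n g h : sumN n (fun q => g q + h q) = sumN n g + sumN n h.
Proof. induction n; simpl; [ring | rewrite IHn; ring]. Qed.

Lemma sumN_scal n a g : sumN n (fun q => a * g q) = a * sumN n g.
Proof. induction n; simpl; [ring | rewrite IHn; ring]. Qed.

Lemma sumN_zero n : sumN n (fun _ => 0) = 0.
Proof. induction n; simpl; [ring | rewrite IHn; ring]. Qed.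

Lemma sumN_swap n p (g : nat -> nat -> R) :
  sumN n (fun r => sumN p (fun q => g r q)) = sumN p (fun q => sumN n (fun r => g r q)).
Proof. induction n; simpl; [now rewrite sumN_zero | now rewrite IHn, <- sumN_plus]. Qed.

Lemma sumN_kronecker n s v : (s < n)%nat ->
  sumN n (fun q => (if Nat.eqb s q then 1 else 0) * v q) = v s.
Proof.
  induction n; intros H; [lia |]. simpl.
  destruct (Nat.eq_dec s n) as [-> | Hne].
  - rewrite Nat.eqb_refl, (sumN_ext _ _ (fun _ => 0)), sumN_zero; [ring |].
    intros q Hq. destruct (Nat.eqb_spec n q); [lia | ring].
  - rewrite IHn by lia. destruct (Nat.eqb_spec s n); [lia | ring].
Qed.

Lemma sumN_abs n a b c : (forall q, (q < n)%nat -> Rabs (b q) <= c) ->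
  Rabs (sumN n (fun q => a q * b q)) <= sumN n (fun q => Rabs (a q)) * c.
Proof.
  induction n; intros H; simpl; [rewrite Rabs_R0; lra |].
  eapply Rle_trans; [apply Rabs_triang |]. rewrite Rmult_plus_distr_r.
  apply Rplus_le_compat; [apply IHn; intros; apply H; lia |].
  rewrite Rabs_mult. apply Rmult_le_compat_l; [apply Rabs_pos | apply H; lia].
Qed.

Lemma sumN_nonneg n g : (forall q, (q < n)%nat -> 0 <= g q) -> 0 <= sumN n g.
Proof.
  induction n; intros H; simpl; [lra |].
  assert (0 <= g n) by (apply H; lia).
  assert (0 <= sumN n g) by (apply IHn; intros; apply H; lia). lra.
Qed.

Lemma sumN_le_term n g q :
  (forall q, (q < n)%nat -> 0 <= g q) -> (q < n)%nat -> g q <= sumN n g.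
Proof.
  induction n; intros H Hq; [lia |]. simpl.
  destruct (Nat.eq_dec q n) as [-> | Hne].
  - assert (0 <= sumN n g) by (apply sumN_nonneg; intros; apply H; lia). lra.
  - assert (g q <= sumN n g) by (apply IHn; [intros; apply H; lia | lia]).
    assert (0 <= g n) by (apply H; lia). lra.
Qed.

Lemma Rabs_le_sumN_abs n a q : (q < n)%nat -> Rabs (a q) <= sumN n (fun q => Rabs (a q)).
Proof. intros Hq. apply (sumN_le_term n (fun q => Rabs (a q))); auto; intros; apply Rabs_pos. Qed.

Lemma sumN_add a b g : sumN (a + b) g = sumN a g + sumN b (fun j => g (a + j)%nat).
Proof.
  induction b; simpl; [rewrite Nat.add_0_r; ring |].
  rewrite Nat.add_succ_r; simpl. rewrite IHb; ring.
Qed.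

Lemma sumN_block m k g :
  sumN (m * k) g = sumN m (fun i => sumN k (fun c => g (i * k + c)%nat)).
Proof. induction m; simpl; auto. rewrite Nat.add_comm, sumN_add, IHm. reflexivity. Qed.

Lemma sumN_derivable n (a : nat -> R) (G : nat -> R -> R) (l : nat -> R) y :
  (forall q, (q < n)%nat -> derivable_pt_lim (G q) y (l q)) ->
  derivable_pt_lim (fun z => sumN n (fun q => a q * G q z)) y (sumN n (fun q => a q * l q)).
Proof.
  induction n; intros H; simpl.
  - apply derivable_pt_lim_ext with (fct_cte 0); [apply derivable_pt_lim_const | reflexivity].
  - apply derivable_pt_lim_ext with
      (plus_fct (fun z => sumN n (fun q => a q * G q z)) (mult_real_fct (a n) (G n)));
      [| reflexivity].
    apply derivable_pt_lim_plus; [apply IHn; intros; apply H; lia |].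
    apply derivable_pt_lim_scal, H; lia.
Qed.

Lemma iterD_lincomb w n (a : nat -> R) (G : nat -> R -> R -> R) :
  (forall q, (q < n)%nat -> smooth_pos (G q)) ->
  forall t x, 0 < t ->
  iterD w (fun t x => sumN n (fun q => a q * G q t x)) t x
  = sumN n (fun q => a q * iterD w (G q) t x).
Proof.
  intros HG. induction w as [| b w IH]; intros t x Ht; [reflexivity |].
  destruct b; simpl; unfold PDt, PDx; apply deriv1_eq.
  - apply derivable_pt_lim_local with (fun s => sumN n (fun q => a q * iterD w (G q) s x)).
    + apply sumN_derivable. intros q Hq. apply smooth_dt; auto.
    + exists t; split; auto. intros y Hy. apply IH. apply Rabs_def2 in Hy; lra.
  - apply derivable_pt_lim_local with (fun s => sumN n (fun q => a q * iterD w (G q) t s)).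
    + apply sumN_derivable. intros q Hq. apply smooth_dx; auto.
    + exists 1; split; [lra |]. intros y _. apply IH; auto.
Qed.

Lemma sgn_mul_self l : sgn l * l = Rabs l.
Proof.
  unfold sgn, Rabs. destruct (Rlt_dec 0 l), (Rcase_abs l); try destruct (Rlt_dec l 0); lra.
Qed.

Lemma Rabs_sgn_le l : Rabs (sgn l) <= 1.
Proof.
  unfold sgn. destruct (Rlt_dec 0 l); [| destruct (Rlt_dec l 0)];
  unfold Rabs; destruct Rcase_abs; lra.
Qed.

Definition roe_scalar (F : R -> R -> R) (Mf : R -> R) (l dt dx t x : R) : R :=
  let fm := F t (x - dx) in let f0 := F t x in let fp := F t (x + dx) in
  let Mm := Mf (x - dx) in let M0 := Mf x in let Mp := Mf (x + dx) in
  (F (t + dt) x - f0) / dt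
  + l / (2 * dx) * (fp - fm)
  - Rabs l / (2 * dx) * (fp - 2 * f0 + fm)
  - ( (Mm + 2 * M0 + Mp) / 4
      + sgn l / 4 * (Mm - Mp)
      - (fm + 2 * f0 + fp) / 4
      - sgn l / 4 * (fm - fp) ).

(* If Mf = g + F(t,.) with g(x) = F_t + l F_x, the residual is a combination
   of Taylor remainders: Tt in time, Ep/Em (second order) for F and Gp/Gm
   (first order) for g in space, plus the first-order term sgn(l) dx F_xt / 2
   coming from the numerical viscosity of the averaged source. *)
Lemma roe_scalar_taylor_form F Mf g l dt dx t x ft fx fxx ftx :
  0 < dt -> 0 < dx ->
  (forall y, Mf y = g y + F t y) -> g x = ft + l * fx ->
  let Tt := F (t + dt) x - F t x - dt * ft in
  let Ep := F t (x + dx) - F t x - dx * fx - dx ^ 2 / 2 * fxx in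
  let Em := F t (x - dx) - F t x + dx * fx - dx ^ 2 / 2 * fxx in
  let Gp := g (x + dx) - g x - dx * (ftx + l * fxx) in
  let Gm := g (x - dx) - g x + dx * (ftx + l * fxx) in
  roe_scalar F Mf l dt dx t x
  = Tt / dt + l * (Ep - Em) / (2 * dx) - Rabs l * (Ep + Em) / (2 * dx)
    - (Gm + Gp) / 4 + sgn l * dx * ftx / 2 - sgn l * (Gm - Gp) / 4.
Proof.
  intros Hdt Hdx HM Hg. cbv zeta. unfold roe_scalar. rewrite !HM, Hg.
  rewrite <- (sgn_mul_self l). field. lra.
Qed.

Lemma Rabs_le_bounds a b : Rabs a <= b -> - b <= a <= b.
Proof. unfold Rabs; destruct (Rcase_abs a); intros; lra. Qed.

Lemma Rabs_mul_le u v A B : Rabs u <= A -> Rabs v <= B -> Rabs (u * v) <= A * B.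
Proof. intros. rewrite Rabs_mult. apply Rmult_le_compat; auto; apply Rabs_pos. Qed.

Lemma Rabs_div_le u d A : 0 < d -> Rabs u <= A -> Rabs (u / d) <= A / d.
Proof.
  intros. unfold Rdiv. rewrite Rabs_mult, Rabs_inv, (Rabs_right d) by lra.
  apply Rmult_le_compat_r; auto. left; apply Rinv_0_lt_compat; auto.
Qed.

Lemma Rabs_add_le u v A B : Rabs u <= A -> Rabs v <= B -> Rabs (u + v) <= A + B.
Proof. intros. eapply Rle_trans; [apply Rabs_triang | lra]. Qed.

Lemma Rabs_sub_le u v A B : Rabs u <= A -> Rabs v <= B -> Rabs (u - v) <= A + B.
Proof. intros. eapply Rle_trans; [apply Rabs_triang | rewrite Rabs_Ropp; lra]. Qed.

Lemma roe_remainder_bound l dt dx Tt Ep Em Gp Gm ftx B1 B2 B4 KG :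
  0 < dt -> 0 < dx ->
  Rabs Tt <= B1 * dt ^ 2 -> Rabs Ep <= B4 * dx ^ 3 -> Rabs Em <= B4 * dx ^ 3 ->
  Rabs Gp <= KG * dx ^ 2 -> Rabs Gm <= KG * dx ^ 2 -> Rabs ftx <= B2 ->
  Rabs (Tt / dt + l * (Ep - Em) / (2 * dx) - Rabs l * (Ep + Em) / (2 * dx)
        - (Gm + Gp) / 4 + sgn l * dx * ftx / 2 - sgn l * (Gm - Gp) / 4)
  <= B1 * dt + B2 * dx / 2 + (2 * Rabs l * B4 + KG) * dx ^ 2.
Proof.
  intros Hdt Hdx HT HEp HEm HGp HGm Hftx.
  assert (Hs := Rabs_sgn_le l).
  assert (b1 : Rabs (Tt / dt) <= B1 * dt).
  { eapply Rle_trans; [apply Rabs_div_le; eauto | right; field; lra]. }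
  assert (b2 : Rabs (l * (Ep - Em) / (2 * dx)) <= Rabs l * B4 * dx ^ 2).
  { eapply Rle_trans; [apply Rabs_div_le; [lra |] |].
    - apply Rabs_mul_le; [apply Rle_refl | apply Rabs_sub_le; eauto].
    - right; field; lra. }
  assert (b3 : Rabs (Rabs l * (Ep + Em) / (2 * dx)) <= Rabs l * B4 * dx ^ 2).
  { eapply Rle_trans; [apply Rabs_div_le; [lra |] |].
    - apply Rabs_mul_le; [rewrite Rabs_Rabsolu; apply Rle_refl | apply Rabs_add_le; eauto].
    - right; field; lra. }
  assert (b4 : Rabs ((Gm + Gp) / 4) <= KG * dx ^ 2 / 2).
  { eapply Rle_trans; [apply Rabs_div_le, Rabs_add_le; eauto; lra | right; field]. }
  assert (b5 : Rabs (sgn l * dx * ftx / 2) <= B2 * dx / 2).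
  { eapply Rle_trans;
      [apply Rabs_div_le, Rabs_mul_le, Hftx; [lra | apply Rabs_mul_le, Rle_refl; exact Hs] |].
    right. rewrite Rabs_right by lra. field. }
  assert (b6 : Rabs (sgn l * (Gm - Gp) / 4) <= KG * dx ^ 2 / 2).
  { eapply Rle_trans; [apply Rabs_div_le, Rabs_mul_le, Rabs_sub_le; eauto; lra |].
    right; field. }
  apply Rabs_le. apply Rabs_le_bounds in b1, b2, b3, b4, b5, b6. lra.
Qed.

Lemma roe_scalar_bound F Mf l t x dt dx B1 B2 B3 B4 :
  0 < t -> 0 < dt -> 0 < dx -> smooth_pos F ->
  (forall y, Mf y = PDt F t y + l * PDx F t y + F t y) ->
  (forall s, t <= s <= t + dt -> Rabs (PDt (PDt F) s x) <= B1) ->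
  (forall y, Rabs (PDx (PDt F) t y) <= B2) ->
  (forall y, Rabs (PDx (PDx (PDt F)) t y) <= B3) ->
  (forall y, Rabs (PDx (PDx (PDx F)) t y) <= B4) ->
  Rabs (roe_scalar F Mf l dt dx t x)
    <= B1 * dt + B2 * dx / 2 + (B3 + 3 * Rabs l * B4) * dx ^ 2.
Proof.
  intros Ht Hdt Hdx HF HM Htt Hxt Hxxt Hxxx.
  pose (g := fun y => PDt F t y + l * PDx F t y).
  pose (g1 := fun y => PDx (PDt F) t y + l * PDx (PDx F) t y).
  pose (g2 := fun y => PDx (PDx (PDt F)) t y + l * PDx (PDx (PDx F)) t y).
  assert (Dg : forall y, derivable_pt_lim g y (g1 y)).
  { intros y. apply derivable_pt_lim_plus;
      [apply (smooth_dx F [true]) | apply derivable_pt_lim_scal, (smooth_dx F [false])]; auto. }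
  assert (Dg1 : forall y, derivable_pt_lim g1 y (g2 y)).
  { intros y. apply derivable_pt_lim_plus; [apply (smooth_dx F [false; true]) |
      apply derivable_pt_lim_scal, (smooth_dx F [false; false])]; auto. }
  assert (Hg2 : forall y, Rabs (g2 y) <= B3 + Rabs l * B4).
  { intros y. apply Rabs_add_le, Rabs_mul_le; auto using Rle_refl. }
  destruct (taylor1_central g g1 g2 x dx (B3 + Rabs l * B4)) as [Tgp Tgm]; auto.
  destruct (taylor2_central (fun z => F t z) (fun z => PDx F t z) (fun z => PDx (PDx F) t z)
              (fun z => PDx (PDx (PDx F)) t z) x dx B4) as [TFp TFm]; auto.
  { intros y. repeat split; auto;
      [apply (smooth_dx F []) | apply (smooth_dx F [false]) | apply (smooth_dx F [false; false])];
      auto. }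
  assert (Tt : Rabs (F (t + dt) x - F t x - (t + dt - t) * PDt F t x)
               <= B1 * (t + dt - t) ^ 2).
  { apply (taylor1_bound (fun s => F s x) (fun s => PDt F s x) (fun s => PDt (PDt F) s x)).
    intros y Hy. unfold btw, Rmin, Rmax in Hy. destruct (Rle_dec t (t + dt)); [| lra].
    repeat split; [apply (smooth_dt F []) | apply (smooth_dt F [true]) | apply Htt]; auto; lra. }
  replace (t + dt - t) with dt in Tt by ring.
  rewrite (roe_scalar_taylor_form F Mf g l dt dx t x (PDt F t x) (PDx F t x)
             (PDx (PDx F) t x) (PDx (PDt F) t x)); auto; cbv zeta.
  replace (B3 + 3 * Rabs l * B4) with (2 * Rabs l * B4 + (B3 + Rabs l * B4)) by ring.
  apply roe_remainder_bound; auto.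
Qed.

Definition decays (P : nat -> Prop) (G : nat -> R -> R -> R) (p : R) : Prop :=
  exists K, forall r t x, P r -> 1 <= t -> Rabs (G r t x) <= K * Rpower t p.

Lemma Rpower_pos t p : 0 < Rpower t p.
Proof. unfold Rpower; apply exp_pos. Qed.

Lemma Rpower_antitone t s p : 0 < t <= s -> p <= 0 -> Rpower s p <= Rpower t p.
Proof.
  intros Hts Hp. replace p with (- (- p)) by ring.
  rewrite (Rpower_Ropp s (- p)), (Rpower_Ropp t (- p)).
  apply Rinv_le_contravar; [apply Rpower_pos | apply Rle_Rpower_l; lra].
Qed.

Lemma decays_nonneg P G p : decays P G p ->
  exists K, 0 <= K /\ forall r t x, P r -> 1 <= t -> Rabs (G r t x) <= K * Rpower t p.
Proof.
  intros [K HK]. exists (Rabs K). split; [apply Rabs_pos |]. intros r t x Hr Ht.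
  eapply Rle_trans; [apply HK; auto |].
  apply Rmult_le_compat_r; [left; apply Rpower_pos | apply Rle_abs].
Qed.

Lemma decays_merge k n G p :
  decays (fun r => (r < k)%nat) G p -> decays (fun r => (k <= r < n)%nat) G p ->
  decays (fun r => (r < n)%nat) G p.
Proof.
  intros [K1 H1] [K2 H2]. exists (Rmax K1 K2). intros r t x Hr Ht.
  assert (Hp := Rpower_pos t p).
  destruct (Nat.lt_ge_cases r k) as [Hrk | Hrk].
  - eapply Rle_trans; [apply H1; auto | apply Rmult_le_compat_r; [lra | apply Rmax_l]].
  - eapply Rle_trans; [apply H2; auto | apply Rmult_le_compat_r; [lra | apply Rmax_r]].
Qed.

Lemma decays_lincomb n n' (A : nat -> nat -> R) G G' p :
  (forall s t x, (s < n')%nat -> 1 <= t -> G' s t x = sumN n (fun r => A s r * G r t x)) ->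
  decays (fun r => (r < n)%nat) G p -> decays (fun s => (s < n')%nat) G' p.
Proof.
  intros HG' Hdec. destruct (decays_nonneg _ _ _ Hdec) as [K [HK0 HK]].
  exists (sumN n' (fun s => sumN n (fun r => Rabs (A s r))) * K).
  intros s t x Hs Ht. rewrite HG' by auto.
  eapply Rle_trans; [apply sumN_abs; intros r Hr; apply HK; auto |].
  rewrite Rmult_assoc. apply Rmult_le_compat_r.
  - assert (Hp := Rpower_pos t p). nra.
  - apply (sumN_le_term n' (fun s => sumN n (fun r => Rabs (A s r)))); auto.
    intros; apply sumN_nonneg; intros; apply Rabs_pos.
Qed.

Section BGK.

Variables (m k : nat) (lam : nat -> R) (M : nat -> (nat -> R) -> (nat -> R)).
Variables (D Dinv : nat -> nat -> R) (f : nat -> nat -> R -> R -> R).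

Hypothesis Hk : (1 <= k)%nat.
Hypothesis HD1 : forall c s, (c < k)%nat -> (s < m * k)%nat ->
  D c s = if Nat.eqb (s mod k) c then 1 else 0.
Hypothesis HDinv2 : forall r s, (r < m * k)%nat -> (s < m * k)%nat ->
  sumN (m * k) (fun q => Dinv r q * D q s) = if Nat.eqb r s then 1 else 0.
Hypothesis Hfsmooth : forall i c, (i < m)%nat -> (c < k)%nat -> smooth_pos (f i c).
Hypothesis Hpde : forall i c t x, (i < m)%nat -> (c < k)%nat -> 0 < t ->
  PDt (f i c) t x + lam i * PDx (f i c) t x = M i (uvec m f t x) c - f i c t x.

Definition fcomp (s : nat) : R -> R -> R := f (s / k) (s mod k).

Lemma block_lt s : (s < m * k)%nat -> (s / k < m)%nat.
Proof. intros Hs. apply Nat.Div0.div_lt_upper_bound. lia. Qed.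

Lemma coord_lt s : (s mod k < k)%nat.
Proof. apply Nat.mod_upper_bound. lia. Qed.

Lemma fcomp_smooth s : (s < m * k)%nat -> smooth_pos (fcomp s).
Proof. intros Hs. apply Hfsmooth; [apply block_lt; auto | apply coord_lt]. Qed.

Lemma ZZ_iterD w r t x : 0 < t ->
  iterD w (ZZ m k D f r) t x = sumN (m * k) (fun q => D r q * iterD w (fcomp q) t x).
Proof. intros Ht. apply (iterD_lincomb w (m * k) _ fcomp); auto using fcomp_smooth. Qed.

Lemma fcomp_iterD w s t x : (s < m * k)%nat -> 0 < t ->
  iterD w (fcomp s) t x = sumN (m * k) (fun r => Dinv s r * iterD w (ZZ m k D f r) t x).
Proof.
  intros Hs Ht.
  rewrite (sumN_ext _ _
    (fun r => sumN (m * k) (fun q => Dinv s r * D r q * iterD w (fcomp q) t x))).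
  2:{ intros r Hr. rewrite ZZ_iterD, <- sumN_scal by auto. apply sumN_ext; intros; ring. }
  rewrite sumN_swap.
  rewrite (sumN_ext _ _ (fun q => (if Nat.eqb s q then 1 else 0) * iterD w (fcomp q) t x)).
  - symmetry; apply sumN_kronecker; auto.
  - intros q Hq. rewrite <- HDinv2, <- (Rmult_comm (iterD w (fcomp q) t x)), <- sumN_scal
      by auto.
    apply sumN_ext; intros; ring.
Qed.

Lemma ZZ_macroscopic c : (c < k)%nat -> ZZ m k D f c = uu m f c.
Proof.
  intros Hc. apply functional_extensionality; intro t.
  apply functional_extensionality; intro x.
  unfold ZZ, uu. rewrite sumN_block. apply sumN_ext. intros i Hi.
  rewrite (sumN_ext _ _ (fun c' => (if Nat.eqb c c' then 1 else 0) * f i c' t x)).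
  - apply sumN_kronecker; auto.
  - intros c' Hc'. rewrite HD1 by (auto; nia).
    replace (i * k + c')%nat with (c' + i * k)%nat by lia.
    rewrite Nat.Div0.mod_add, Nat.mod_small, Nat.div_add, Nat.div_small by (auto; lia).
    simpl. rewrite Nat.eqb_sym. reflexivity.
Qed.

Lemma fcomp_decay w p :
  decays (fun r => (r < m * k)%nat) (fun r => iterD w (ZZ m k D f r)) p ->
  decays (fun s => (s < m * k)%nat) (fun s => iterD w (fcomp s)) p.
Proof.
  apply decays_lincomb with (A := Dinv). intros s t x Hs Ht. apply fcomp_iterD; auto; lra.
Qed.

Lemma roe_component_bound rho : 0 < rho ->
  decays (fun s => (s < m * k)%nat) (fun s => iterD [true; true] (fcomp s)) (-2) ->
  decays (fun s => (s < m * k)%nat) (fun s => iterD [false; true] (fcomp s)) (-2) ->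
  decays (fun s => (s < m * k)%nat) (fun s => iterD [false; false; true] (fcomp s)) (-2) ->
  decays (fun s => (s < m * k)%nat) (fun s => iterD [false; false; false] (fcomp s)) (-2) ->
  exists C, 0 <= C /\ forall s dx t x, (s < m * k)%nat -> 0 < dx -> 1 <= t ->
    Rabs (roe_residual m lam M f (rho * dx) dx (s / k) (s mod k) t x)
      <= C * (dx * Rpower t (-2) + dx ^ 2 * Rpower t (-2)).
Proof.
  intros Hrho Wtt Wxt Wxxt Wxxx.
  destruct (decays_nonneg _ _ _ Wtt) as [K1 [HK1 Btt]].
  destruct (decays_nonneg _ _ _ Wxt) as [K2 [HK2 Bxt]].
  destruct (decays_nonneg _ _ _ Wxxt) as [K3 [HK3 Bxxt]].
  destruct (decays_nonneg _ _ _ Wxxx) as [K4 [HK4 Bxxx]].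
  pose (L := sumN m (fun i => Rabs (lam i))).
  assert (HL0 : 0 <= L) by (apply sumN_nonneg; intros; apply Rabs_pos).
  exists (K1 * rho + K2 / 2 + (K3 + 3 * L * K4)). split; [nra |].
  intros s dx t x Hs Hdx Ht.
  assert (Hl : Rabs (lam (s / k)) <= L) by (apply Rabs_le_sumN_abs, block_lt; auto).
  pose (P := Rpower t (-2)). assert (HP : 0 < P) by apply Rpower_pos.
  change (roe_residual m lam M f (rho * dx) dx (s / k) (s mod k) t x) with
    (roe_scalar (fcomp s) (fun xx => M (s / k)%nat (uvec m f t xx) (s mod k)%nat)
       (lam (s / k)%nat) (rho * dx) dx t x).
  eapply Rle_trans.
  - apply roe_scalar_bound with (B1 := K1 * P) (B2 := K2 * P) (B3 := K3 * P) (B4 := K4 * P);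
      auto using fcomp_smooth; try nra.
    + intros y. unfold fcomp.
      rewrite (Hpde (s / k) (s mod k) t y); [ring | apply block_lt | apply coord_lt | lra]; auto.
    + intros t' Ht'. eapply Rle_trans; [apply Btt; auto; lra |].
      apply Rmult_le_compat_l; [auto | apply Rpower_antitone; lra].
    + intros y. apply Bxt; auto.
    + intros y. apply Bxxt; auto.
    + intros y. apply Bxxx; auto.
  - assert (0 <= dx ^ 2) by nra.
    assert (0 <= P * dx ^ 2 * (3 * L * K4 - 3 * Rabs (lam (s / k)%nat) * K4))
      by (apply Rmult_le_pos; nra).
    assert (0 <= P * dx ^ 2 * (K1 * rho + K2 / 2)) by (apply Rmult_le_pos; nra).
    assert (0 <= P * dx * (K3 + 3 * L * K4)) by (apply Rmult_le_pos; nra).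
    fold P. nra.
Qed.

Lemma trunc_Z_decay rho C : 0 <= C ->
  (forall s dx t x, (s < m * k)%nat -> 0 < dx -> 1 <= t ->
    Rabs (roe_residual m lam M f (rho * dx) dx (s / k) (s mod k) t x)
      <= C * (dx * Rpower t (-2) + dx ^ 2 * Rpower t (-2))) ->
  forall r dx t x, (r < m * k)%nat -> 0 < dx -> 1 <= t ->
    Rabs (trunc_Z m k D lam M f (rho * dx) dx r t x)
      <= (sumN (m * k) (fun r => sumN (m * k) (fun s => Rabs (D r s))) * C)
         * (dx * Rpower t (-2) + dx ^ 2 * Rpower t (- (3 / 2))).
Proof.
  intros HC Hres r dx t x Hr Hdx Ht. unfold trunc_Z.
  eapply Rle_trans; [apply sumN_abs; intros s Hs; apply Hres; auto |].
  assert (HP := Rpower_pos t (-2)).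
  assert (HPQ : Rpower t (-2) <= Rpower t (- (3 / 2))) by (apply Rle_Rpower; lra).
  assert (Hdx2 : 0 <= dx ^ 2) by nra.
  rewrite Rmult_assoc. apply Rmult_le_compat.
  - apply sumN_nonneg; intros; apply Rabs_pos.
  - apply Rmult_le_pos; [auto | nra].
  - apply (sumN_le_term (m * k) (fun r => sumN (m * k) (fun s => Rabs (D r s)))); auto.
    intros; apply sumN_nonneg; intros; apply Rabs_pos.
  - apply Rmult_le_compat_l; [auto | nra].
Qed.

End BGK.

Theorem mainTheorem4
  (m k : nat) (lam : nat -> R)
  (M : nat -> (nat -> R) -> (nat -> R))
  (D Dinv : nat -> nat -> R)
  (f : nat -> nat -> R -> R -> R)
  (Hm : (1 <= m)%nat) (Hk : (1 <= k)%nat)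
  (* Maxwellians: smooth, consistent *)
  (HMsmooth : forall i c, (i < m)%nat -> (c < k)%nat -> smoothRk k (fun v => M i v c))
  (HMcons : forall v c, (c < k)%nat -> sumN m (fun i => M i v c) = v c)
  (* the matrix D *)
  (HD1 : forall c s, (c < k)%nat -> (s < m * k)%nat ->
           D c s = if Nat.eqb (s mod k) c then 1 else 0)
  (HDinv1 : forall r s, (r < m * k)%nat -> (s < m * k)%nat ->
           sumN (m * k) (fun q => D r q * Dinv q s) = if Nat.eqb r s then 1 else 0)
  (HDinv2 : forall r s, (r < m * k)%nat -> (s < m * k)%nat ->
           sumN (m * k) (fun q => Dinv r q * D q s) = if Nat.eqb r s then 1 else 0)
  (HDTD : forall s s', (s < m * k)%nat -> (s' < m * k)%nat -> (s / k <> s' / k)%nat ->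
           sumN (m * k) (fun r => D r s * D r s') = 0)
  (HAsym : forall r s, (r < m * k)%nat -> (s < m * k)%nat ->
           AA m k D Dinv lam r s = AA m k D Dinv lam s r)
  (* A_11 = 0 *)
  (HA11 : forall r s, (r < k)%nat -> (s < k)%nat -> AA m k D Dinv lam r s = 0)
  (* the exact global smooth solution of the BGK system *)
  (Hfsmooth : forall i c, (i < m)%nat -> (c < k)%nat -> smooth_pos (f i c))
  (Hpde : forall i c t x, (i < m)%nat -> (c < k)%nat -> 0 < t ->
           PDt (f i c) t x + lam i * PDx (f i c) t x
           = M i (uvec m f t x) c - f i c t x)
  (* decay estimates *)
  (HdecZ : forall beta, (beta <= 3)%nat -> exists C, forall r t x,
           (r < m * k)%nat -> 1 <= t ->
           Rabs (DxN beta (ZZ m k D f r) t x) <= C * Rpower t (- (1/2 + INR beta / 2)))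
  (HdecZt : forall beta, (beta <= 3)%nat -> exists C, forall r t x,
           (k <= r < m * k)%nat -> 1 <= t ->
           Rabs (DxN beta (ZZ m k D f r) t x) <= C * Rpower t (- (1 + INR beta / 2)))
  (HdecZ_t : forall beta, (beta <= 3)%nat -> exists C, forall r t x,
           (r < m * k)%nat -> 1 <= t ->
           Rabs (DxN beta (PDt (ZZ m k D f r)) t x) <= C * Rpower t (- (1 + INR beta / 2)))
  (HdecZt_t : forall beta, (beta <= 3)%nat -> exists C, forall r t x,
           (k <= r < m * k)%nat -> 1 <= t ->
           Rabs (DxN beta (PDt (ZZ m k D f r)) t x) <= C * Rpower t (- (3/2 + INR beta / 2)))
  (* extra decay available when A_11 = 0 *)
  (HdecA11 : exists C, forall t x, 1 <= t ->
           (forall c, (c < k)%nat ->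
              Rabs (PDt (PDt (uu m f c)) t x) <= C * Rpower t (-2) /\
              Rabs (PDx (PDt (uu m f c)) t x) <= C * Rpower t (-2)) /\
           (forall r, (k <= r < m * k)%nat ->
              Rabs (PDt (ZZ m k D f r) t x) <= C * Rpower t (-2) /\
              Rabs (PDt (PDt (ZZ m k D f r)) t x) <= C * Rpower t (-2)))
  (rho : R) (Hrho : 0 < rho) :
  exists C T0, 0 < T0 /\
    forall dx t x, 0 < dx -> T0 <= t ->
      (forall r, (r < k)%nat ->
         Rabs (trunc_Z m k D lam M f (rho * dx) dx r t x)
           <= C * (dx * Rpower t (-2) + dx ^ 2 * Rpower t (- (3/2))))
      /\
      (forall r, (k <= r < m * k)%nat ->
         Rabs (trunc_Z m k D lam M f (rho * dx) dx r t x)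
           <= C * (dx * Rpower t (-2) + dx ^ 2 * Rpower t (- (3/2)))).
Proof.
  destruct HdecA11 as [CA HA].
  assert (Wtt : decays (fun r => (r < m * k)%nat)
                  (fun r => iterD [true; true] (ZZ m k D f r)) (-2)).
  { apply decays_merge with k; exists CA; intros r t x Hr Ht.
    - rewrite ZZ_macroscopic by auto. apply (proj1 (proj1 (HA t x Ht) r Hr)).
    - apply (proj2 (proj2 (HA t x Ht) r Hr)). }
  assert (Wxt : decays (fun r => (r < m * k)%nat)
                  (fun r => iterD [false; true] (ZZ m k D f r)) (-2)).
  { apply decays_merge with k.
    - exists CA; intros r t x Hr Ht.
      rewrite ZZ_macroscopic by auto. apply (proj2 (proj1 (HA t x Ht) r Hr)).
    - replace (-2) with (- (3 / 2 + INR 1 / 2)) by (simpl; lra).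
      exact (HdecZt_t 1%nat ltac:(lia)). }
  assert (Wxxt : decays (fun r => (r < m * k)%nat)
                   (fun r => iterD [false; false; true] (ZZ m k D f r)) (-2)).
  { replace (-2) with (- (1 + INR 2 / 2)) by (simpl; lra). exact (HdecZ_t 2%nat ltac:(lia)). }
  assert (Wxxx : decays (fun r => (r < m * k)%nat)
                   (fun r => iterD [false; false; false] (ZZ m k D f r)) (-2)).
  { replace (-2) with (- (1 / 2 + INR 3 / 2)) by (simpl; lra). exact (HdecZ 3%nat ltac:(lia)). }
  pose proof (fcomp_decay m k D Dinv f Hk HDinv2 Hfsmooth) as Hf.
  destruct (roe_component_bound m k lam M f Hk Hfsmooth Hpde rho Hrho
              (Hf _ _ Wtt) (Hf _ _ Wxt) (Hf _ _ Wxxt) (Hf _ _ Wxxx)) as [C [HC Hres]].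
  eexists; exists 1. split; [lra |]. intros dx t x Hdx Ht.
  split; intros r Hr; apply (trunc_Z_decay m k lam M D f rho C HC Hres); auto; nia.
Qed.
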